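(* Let $A$ be a finite skew brace which is left nilpotent and of nilpotent type (i.e. $(A,+)$ is a nilpotent group). Then each of the graphs $\Lambda(A)$ and $\Theta(A)$ is connected and has diameter at most $2$.
   Context: A skew brace is a triple $(A,+,\circ)$ where $(A,+)$ and $(A,\circ)$ are groups (same identity $0$) with $a\circ(b+c)=a\circ b-a+a\circ c$ for all $a,b,c\in A$. The map $\lambda\colon(A,\circ)\to\operatorname{Aut}(A,+)$, $\lambda_a(b)=-a+a\circ b$, is an action by automorphisms; $\theta$ is the action of the semidirect product $(A,+)\rtimes_\lambda(A,\circ)$ on $(A,+)$ given by $\theta_{(a,b)}(c)=a+\lambda_b(c)-a$. For $a,b\in A$ let $a*b=\lambda_a(b)-b$, and for subsets $X,Y$ let $X*Y$ be the additive subgroup generated by all $x*y$. Set $A^1=A$, $A^{n+1}=A*A^n$; $A$ is left nilpotent if $A^n=\{0\}$ for some $n$. For a finite skew brace, $\Lambda(A)$ (resp. $\Theta(A)$) is the graph whose vertices are the $\lambda$-orbits (resp. $\theta$-orbits) in $A$ of size $>1$, two distinct vertices $L_1,L_2$ being adjacent iff $\gcd(|L_1|,|L_2|)\ne 1$. *)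

From HB Require Import structures.
From mathcomp Require Import all_boot all_order all_fingroup all_solvable.
Set Implicit Arguments. Unset Strict Implicit. Unset Printing Implicit Defensive.

Local Open Scope group_scope.

(* A finite skew brace (A,+,o) is modelled on a finGroupType gT: the additive
   group (A,+) is the group structure of gT (written multiplicatively:
   a + b  ~  a * b,  -a  ~  a^-1,  0  ~  1), and the circle operation is a
   separate binary operation [circ] on gT. *)

Definition is_skew_brace (gT : finGroupType) (circ : gT -> gT -> gT) : Prop :=
  [/\ (forall a b c, circ a (circ b c) = circ (circ a b) c),
      (forall a, circ 1 a = a /\ circ a 1 = a),
      (forall a, exists b, circ a b = 1 /\ circ b a = 1) &
      (forall a b c, circ a (b * c) = circ a b * a^-1 * circ a c)].

Definition blam (gT : finGroupType) (circ : gT -> gT -> gT) (a b : gT) : gT :=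
  a^-1 * circ a b.

Definition bstar (gT : finGroupType) (circ : gT -> gT -> gT) (a b : gT) : gT :=
  blam circ a b * b^-1.

Definition bstar_set (gT : finGroupType) (circ : gT -> gT -> gT)
  (X Y : {set gT}) : {set gT} :=
  <<[set bstar circ x y | x in X, y in Y]>>.

(* A^1 = A, A^{n+1} = A * A^n  (bpow circ n = A^{n+1}) *)
Fixpoint bpow (gT : finGroupType) (circ : gT -> gT -> gT) (n : nat) : {set gT} :=
  if n is n'.+1 then bstar_set circ [set: gT] (bpow circ n') else [set: gT].

Definition left_nilpotent (gT : finGroupType) (circ : gT -> gT -> gT) : Prop :=
  exists n, bpow circ n = 1.

Definition lam_orbit (gT : finGroupType) (circ : gT -> gT -> gT) (x : gT)
  : {set gT} := [set blam circ a x | a in [set: gT]].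

Definition theta_orbit (gT : finGroupType) (circ : gT -> gT -> gT) (c : gT)
  : {set gT} := [set a * blam circ b c * a^-1 | a in [set: gT], b in [set: gT]].

Definition orbit_vertices (gT : finGroupType) (orb : gT -> {set gT})
  : {set {set gT}} :=
  [set L in [set orb x | x in [set: gT]] | 1 < #|L|]%N.

Definition orbit_adj (gT : finGroupType) (V : {set {set gT}}) : rel {set gT} :=
  fun L1 L2 => [&& L1 \in V, L2 \in V, L1 != L2 & gcdn #|L1| #|L2| != 1]%N.

Definition connected_diam_le2 (gT : finGroupType) (V : {set {set gT}}) : Prop :=
  (forall L1 L2, L1 \in V -> L2 \in V -> connect (orbit_adj V) L1 L2) /\
  (forall L1 L2, L1 \in V -> L2 \in V ->
     L1 = L2 \/ orbit_adj V L1 L2 \/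
     exists L3, orbit_adj V L1 L3 && orbit_adj V L3 L2).

Definition Lambda_graph_vertices (gT : finGroupType) (circ : gT -> gT -> gT) :=
  orbit_vertices (lam_orbit circ).
Definition Theta_graph_vertices (gT : finGroupType) (circ : gT -> gT -> gT) :=
  orbit_vertices (theta_orbit circ).

From mathcomp Require Import all_boot all_order all_fingroup all_solvable.
Set Implicit Arguments. Unset Strict Implicit. Unset Printing Implicit Defensive.
Local Open Scope group_scope.

(* Both graphs are orbit graphs of a group G of automorphisms of (A,+) with the
   property that the orbit of a pi-element has pi-power size.  For such G and
   nilpotent (A,+) the diameter bound is pure group theory
   ([orbit_graph_diam2]): a non-trivial orbit O(x) has a prime p dividing
   |O(x_p)|, which divides |O(x)|; given orbits O(x), O(y) with coprime sizes
   and such primes p, q, the orbit of z = x_p y_q (the factors commute since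
   (A,+) is nilpotent) has size divisible by p and by q, so it is adjacent
   to both.

   The pi-size property comes from the skew brace: each O_pi(A,+) is a
   subgroup of (A,o), so its elements have pi-order as lambda-maps; left
   nilpotence forces a pi'-element to act trivially on pi-elements
   ([lam_coprime_fix]), hence lambda_b(y) = lambda_(b_pi)(y) for a pi-element y,
   and the lambda-orbit (resp. theta-orbit) of y is an orbit of the pi-group
   generated by the lambda_a (resp. theta_(a,b)) with a, b in O_pi(A,+). *)

Section GroupFacts.
Variable gT : finGroupType.
Implicit Types (a u x y : gT) (pi : nat_pred).

Lemma morph1_mul (f : gT -> gT) : {morph f : x y / x * y} -> f 1 = 1.
Proof. by move=> fM; apply: (@mulgI _ (f 1)); rewrite -fM !mulg1. Qed.

Lemma morphX_mul (f : gT -> gT) : {morph f : x y / x * y} ->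
  forall x k, f (x ^+ k) = f x ^+ k.
Proof.
move=> fM x; elim=> [|k IHk]; first by rewrite !expg0 (morph1_mul fM).
by rewrite !expgS fM IHk.
Qed.

Lemma morphV_mul (f : gT -> gT) : {morph f : x y / x * y} ->
  forall x, f x^-1 = (f x)^-1.
Proof.
by move=> fM x; apply: (@mulIg _ (f x)); rewrite -fM !mulVg (morph1_mul fM).
Qed.

Lemma morphJ_mul (f : gT -> gT) : {morph f : x y / x * y} ->
  forall x y, f (x ^ y) = f x ^ f y.
Proof. by move=> fM x y; rewrite !conjgE !fM (morphV_mul fM). Qed.

Lemma p_elt_of_expg pi x n : pi.-nat n -> x ^+ n = 1 -> pi.-elt x.
Proof. by move=> pi_n xn1; apply: pnat_dvd pi_n; rewrite order_dvdn xn1. Qed.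

Lemma pgroup_of_p_elts pi (G : {group gT}) :
  {in G, forall x, pi.-elt x} -> pi.-group G.
Proof.
move=> piG; apply/pgroupP => q q_pr /(Cauchy q_pr)[x Gx ox].
by rewrite -(pnatE _ q_pr) -ox; apply: piG.
Qed.

Lemma fixed_translation_trivial pi (f : gT -> gT) N x d :
  {morph f : u v / u * v} -> pi^'.-nat N -> iter N f x = x ->
  f d = d -> f x = d * x -> pi.-elt d -> d = 1.
Proof.
move=> fM pi'N fNx fd fx pi_d.
have iterf j : iter j f x = d ^+ j * x.
  elim: j => [|j IHj] /=; first by rewrite mul1g.
  by rewrite IHj fM (morphX_mul fM) fd fx mulgA -expgSr.
have dN : d ^+ N = 1 by apply: (@mulIg _ x); rewrite mul1g -iterf fNx.
have /eqP : #[d] = 1%N by apply: pnat_1 pi_d (pnat_dvd _ pi'N); rewrite order_dvdn dN.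
by rewrite order_eq1 => /eqP.
Qed.

Lemma gcdn_ne1 p m n : prime p -> (p %| m)%N -> (p %| n)%N -> gcdn m n != 1%N.
Proof.
move=> p_pr pm pn; apply: contraTneq (prime_gt1 p_pr) => mn1.
by have := dvdn_gcd p m n; rewrite pm pn mn1 dvdn1 => /eqP ->.
Qed.

Hypothesis nilG : nilpotent [set: gT].

Lemma mem_pcoreT pi x : (x \in 'O_pi([set: gT])) = pi.-elt x.
Proof.
exact: (mem_normal_Hall (nilpotent_pcore_Hall pi nilG) (pcore_normal _ _)) (in_setT x).
Qed.

Lemma commute_p_elt pi x y : pi.-elt x -> pi^'.-elt y -> commute x y.
Proof.
rewrite -!mem_pcoreT => Ox Oy.
have [_ _ cOO _] := dprodP (nilpotent_pcoreC pi nilG).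
exact: commute_sym (centsP cOO y Oy x Ox).
Qed.

Lemma conjg_p_elt_constt pi u a : pi.-elt u -> u ^ a = u ^ a.`_pi.
Proof.
move=> pi_u; rewrite -{1}(consttC pi a) conjgM.
have pi_ua : pi.-elt (u ^ a.`_pi) by rewrite p_eltJ.
by apply/conjg_fixP/commgP; apply: commute_p_elt pi_ua (p_elt_constt _ _).
Qed.

End GroupFacts.

Lemma pnat_orbit (T : finType) (G : {group {perm T}}) pi x :
  pi.-group G -> pi.-nat #|orbit 'P G x|.
Proof. by rewrite card_orbit; apply: pnat_dvd (dvdn_indexg _ _). Qed.

Lemma connected_diam_le2I (gT : finGroupType) (V : {set {set gT}}) :
  (forall L1 L2, L1 \in V -> L2 \in V ->
     L1 = L2 \/ orbit_adj V L1 L2 \/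
     exists L3, orbit_adj V L1 L3 && orbit_adj V L3 L2) ->
  connected_diam_le2 V.
Proof.
move=> diam; split=> // L1 L2 V1 V2.
case: (diam L1 L2 V1 V2) => [-> | [L12 | [L3 /andP[L13 L32]]]].
- exact: connect0.
- exact: connect1.
- exact: connect_trans (connect1 L13) (connect1 L32).
Qed.

Section AutomorphismOrbitGraph.
Variable gT : finGroupType.
Variable G : {group {perm gT}}.
Hypothesis G_morph : forall s, s \in G -> {morph s : x y / x * y}.
Local Notation O := (orbit 'P G).

(* x_pi is a power of x, so its stabiliser contains that of x. *)
Lemma orbit_constt_dvd (pi : nat_pred) x : (#|O x.`_pi| %| #|O x|)%N.
Proof.
rewrite !card_orbit; apply: indexgS; apply/subsetP => s.
rewrite !inE !sub1set !inE /= => /andP[Gs /eqP sx]; rewrite Gs /=.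
have /cycleP[k ->] := cycle_constt pi x.
by rewrite apermE (morphX_mul (G_morph Gs)) -apermE sx.
Qed.

(* An automorphism moving x moves some p-part of x, as x = prod_p x_p. *)
Lemma moved_constt s x : s \in G -> s x != x -> exists p : nat, s x.`_p != x.`_p.
Proof.
move=> Gs; case: (boolP [exists p : 'I_#[x].+1, s x.`_p != x.`_p]).
  by case/existsP=> p movp; exists p.
move/existsPn=> fixp /eqP sx; exfalso; apply: sx.
rewrite -{1}(prod_constt x) big_mkord.
rewrite (big_morph s (G_morph Gs) (morph1_mul (G_morph Gs))).
rewrite -[RHS]prod_constt big_mkord.
by apply: eq_bigr => p _; apply/eqP/negPn/fixp.
Qed.

Hypothesis G_pi_orbit : forall (pi : nat_pred) y, pi.-elt y -> pi.-nat #|O y|.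

(* A non-trivial orbit O(x) yields a prime p dividing |O(x_p)|: that orbit is
   non-trivial and has p-power size. *)
Lemma orbit_prime_constt x :
  (1 < #|O x|)%N -> exists2 p, prime p & (p %| #|O x.`_p|)%N.
Proof.
move=> O_gt1; have [s Gs movx] : exists2 s, s \in G & s x != x.
  case: (boolP [exists s in G, s x != x]).
    by case/exists_inP=> s Gs movx; exists s.
  move/exists_inPn=> fixx; move: O_gt1.
  suff /orbit1P-> : x \in 'Fix_('P)(G) by rewrite cards1.
  by apply/afixP=> s Gs; apply/eqP; rewrite -[_ == _]negbK fixx.
have [p movxp] := moved_constt Gs movx.
have Oxp_gt1 : (1 < #|O x.`_p|)%N.
  apply/card_gt1P; exists x.`_p, (s x.`_p).
  by rewrite orbit_refl -apermE mem_orbit // eq_sym.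
have : pdiv #|O x.`_p| \in \pi(#|O x.`_p|) by rewrite pi_pdiv.
move/(pnatPpi (G_pi_orbit (p_elt_constt p x))); rewrite inE => /eqP pdivE.
by exists p; [rewrite -pdivE pdiv_prime | rewrite -{1}pdivE pdiv_dvd].
Qed.

Hypothesis nilG : nilpotent [set: gT].

(* For distinct primes p, q with p | |O(x_p)| and q | |O(y_q)|, the element
   z = x_p y_q has p-part x_p and q-part y_q (the factors commute), so both
   p and q divide |O(z)|. *)
Lemma orbit_mixed_constt p q x y : p != q ->
    (p %| #|O x.`_p|)%N -> (q %| #|O y.`_q|)%N ->
  exists2 z, (p %| #|O z|)%N & (q %| #|O z|)%N.
Proof.
move=> neqpq pOxp qOyq.
have p'yq : p^'.-elt y.`_q.
  by apply: sub_p_elt (p_elt_constt q y) => r /eqP->; rewrite !inE eq_sym.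
have q'xp : q^'.-elt x.`_p.
  by apply: sub_p_elt (p_elt_constt p x) => r /eqP->; rewrite !inE.
have cxy : commute x.`_p y.`_q := commute_p_elt nilG (p_elt_constt p x) p'yq.
have xp_p := constt_p_elt (p_elt_constt p x).
have yq_q := constt_p_elt (p_elt_constt q y).
exists (x.`_p * y.`_q).
  apply: dvdn_trans (orbit_constt_dvd p _).
  by rewrite (consttM _ cxy) xp_p (constt1P p'yq) mulg1.
apply: dvdn_trans (orbit_constt_dvd q _).
by rewrite (consttM _ cxy) yq_q (constt1P q'xp) mul1g.
Qed.

(* Main combinatorial step: the orbit graph has diameter at most 2.  Two
   distinct non-adjacent orbits have coprime sizes; the primes p, q given by
   [orbit_prime_constt] are then distinct and [orbit_mixed_constt] provides
   a common neighbour. *)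
Lemma orbit_graph_diam2 : connected_diam_le2 (orbit_vertices O).
Proof.
apply: connected_diam_le2I => L1 L2 V1 V2.
case/setIdP: (V1) (V2) => /imsetP[x _ eL1] Ox_gt1 /setIdP[/imsetP[y _ eL2] Oy_gt1].
subst L1 L2.
have [-> | neqxy] := eqVneq (O x) (O y); [by left | right].
have [coprimexy | ] := eqVneq (gcdn #|O x| #|O y|) 1%N; last first.
  by move=> gcdxy; left; rewrite /orbit_adj V1 V2 neqxy gcdxy.
right; have [p p_pr pOxp] := orbit_prime_constt Ox_gt1.
have [q q_pr qOyq] := orbit_prime_constt Oy_gt1.
have pOx := dvdn_trans pOxp (orbit_constt_dvd p x).
have qOy := dvdn_trans qOyq (orbit_constt_dvd q y).
have neqpq : p != q.
  apply/eqP => eqpq; move: pOx; rewrite eqpq => qOx.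
  by move: (gcdn_ne1 q_pr qOx qOy); rewrite coprimexy.
have [z pOz qOz] := orbit_mixed_constt neqpq pOxp qOyq.
have Vz : O z \in orbit_vertices O.
  rewrite inE imset_f ?in_setT //= (leq_trans (prime_gt1 p_pr)) // dvdn_leq //.
  by rewrite card_gt0; apply/set0Pn; exists z; apply: orbit_refl.
have zx : O z != O x.
  by apply/eqP => ezx; move: (gcdn_ne1 q_pr qOz qOy); rewrite ezx coprimexy.
have zy : O z != O y.
  by apply/eqP => ezy; move: (gcdn_ne1 p_pr pOx pOz); rewrite ezy coprimexy.
exists (O z); rewrite /orbit_adj V1 V2 Vz eq_sym zx zy /=.
by rewrite (gcdn_ne1 p_pr pOx pOz) (gcdn_ne1 q_pr qOz qOy).
Qed.

End AutomorphismOrbitGraph.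

Lemma orbit_vertices_eq (gT : finGroupType) (O1 O2 : gT -> {set gT}) :
  O1 =1 O2 -> orbit_vertices O1 = orbit_vertices O2.
Proof. by move=> eqO; rewrite /orbit_vertices (eq_imset _ eqO). Qed.

Section SkewBrace.
Variables (gT : finGroupType) (circ : gT -> gT -> gT).
Hypothesis sb : is_skew_brace circ.
Local Notation lam := (blam circ).
Implicit Types (a b c d x y : gT) (pi : nat_pred) (S : {group gT}).

Lemma circA a b c : circ a (circ b c) = circ (circ a b) c.
Proof. by case: sb. Qed.

Lemma circ1g a : circ 1 a = a.
Proof. by case: sb => _ /(_ a)[]. Qed.

Lemma circg1 a : circ a 1 = a.
Proof. by case: sb => _ /(_ a)[]. Qed.

Lemma circ_inverse a : exists b, circ a b = 1 /\ circ b a = 1.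
Proof. by case: sb. Qed.

Lemma circ_inj a : injective (circ a).
Proof.
move=> x y eq_axy; have [b [_ ba1]] := circ_inverse a.
by rewrite -(circ1g x) -(circ1g y) -ba1 -!circA eq_axy.
Qed.

Lemma circE a b : circ a b = a * lam a b.
Proof. by rewrite /blam mulKVg. Qed.

Lemma lamM a : {morph lam a : x y / x * y}.
Proof. by case: sb => _ _ _ dist x y; rewrite /blam dist !mulgA. Qed.

Lemma lam_inj a : injective (lam a).
Proof. by move=> x y /mulgI /circ_inj. Qed.

Lemma lam1g x : lam 1 x = x.
Proof. by rewrite /blam invg1 mul1g circ1g. Qed.

Lemma lam_circ a b x : lam (circ a b) x = lam a (lam b x).
Proof.
rewrite [lam b x]/blam (lamM a) (morphV_mul (lamM a)) /blam circA invMg invgK.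
by rewrite !mulgA mulgK.
Qed.

Lemma lam_p_elt pi a x : pi.-elt x -> pi.-elt (lam a x).
Proof.
move=> pi_x; apply: (p_elt_of_expg pi_x).
by rewrite -(morphX_mul (lamM a)) expg_order (morph1_mul (lamM a)).
Qed.

Definition circ_pow a n := iter n (circ a) 1.

Lemma lam_circ_pow a n x : lam (circ_pow a n) x = iter n (lam a) x.
Proof. by elim: n => [|n IHn] /=; rewrite ?lam1g // lam_circ IHn. Qed.

(* S is closed under the circle operation; as S is finite it is then a
   subgroup of (A,o) when it contains 0. *)
Definition circ_closed (S : {set gT}) :=
  forall x y, x \in S -> y \in S -> circ x y \in S.

Definition circ_perm a : {perm gT} := perm (@circ_inj a).

Lemma circ_permM a b : circ_perm a * circ_perm b = circ_perm (circ b a).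
Proof. by apply/permP => x; rewrite permM !permE circA. Qed.

Lemma circ_permX a n : circ_perm a ^+ n = circ_perm (circ_pow a n).
Proof.
elim: n => [|n IHn]; last by rewrite expgSr IHn circ_permM.
by apply/permP => x; rewrite perm1 permE /= circ1g.
Qed.

Lemma circ_pow_card S a : circ_closed S -> a \in S -> circ_pow a #|S| = 1.
Proof.
move=> circS Sa.
have gsS : group_set (circ_perm @: S).
  apply/group_setP; split.
    by apply/imsetP; exists 1 => //; apply/permP => x; rewrite perm1 permE circ1g.
  move=> _ _ /imsetP[x Sx ->] /imsetP[y Sy ->]; rewrite circ_permM.
  by apply: imset_f; apply: circS.
have cardS : #|Group gsS| = #|S|.
  apply: card_imset => x y /(congr1 (fun s : {perm gT} => s 1)).
  by rewrite !permE !circg1.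
have := expg_cardG (imset_f circ_perm Sa : circ_perm a \in Group gsS).
rewrite cardS circ_permX => /(congr1 (fun s : {perm gT} => s 1)).
by rewrite permE perm1 circg1.
Qed.

Lemma circ_closedT : circ_closed [set: gT].
Proof. by move=> x y _ _; apply: in_setT. Qed.

Definition lam_perm a : {perm gT} := perm (@lam_inj a).

Lemma lam_permM a b : lam_perm a * lam_perm b = lam_perm (circ b a).
Proof. by apply/permP => x; rewrite permM !permE lam_circ. Qed.

Lemma lam_perm1 : lam_perm 1 = 1.
Proof. by apply/permP => x; rewrite perm1 permE lam1g. Qed.

Lemma lam_permX a n : lam_perm a ^+ n = lam_perm (circ_pow a n).
Proof. by elim: n => [|n IHn]; rewrite ?lam_perm1 // expgSr IHn lam_permM. Qed.

Lemma lam_perm_group_set S : circ_closed S -> group_set (lam_perm @: S).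
Proof.
move=> circS; apply/group_setP; split; first by rewrite -lam_perm1 imset_f.
move=> _ _ /imsetP[x Sx ->] /imsetP[y Sy ->].
by rewrite lam_permM imset_f ?circS.
Qed.

Definition lam_group S (circS : circ_closed S) := Group (lam_perm_group_set circS).

Lemma orbit_lam_group S (circS : circ_closed S) y :
  orbit 'P (lam_group circS) y = [set lam a y | a in S].
Proof. by rewrite /orbit -imset_comp; apply: eq_imset => a; rewrite /= apermE permE. Qed.

Lemma theta_inj a b : injective (fun x => lam b x ^ a).
Proof. by move=> x y /conjg_inj /lam_inj. Qed.

Definition theta_perm a b : {perm gT} := perm (@theta_inj a b).

Lemma theta_permE a b x : theta_perm a b x = lam b x ^ a.
Proof. by rewrite permE. Qed.

Lemma theta_permM a b a' b' :
  theta_perm a b * theta_perm a' b' = theta_perm (lam b' a * a') (circ b' b).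
Proof.
by apply/permP => x; rewrite permM !theta_permE lam_circ conjgM -(morphJ_mul (lamM b')).
Qed.

Lemma theta_perm1 : theta_perm 1 1 = 1.
Proof. by apply/permP => x; rewrite perm1 theta_permE lam1g conjg1. Qed.

Lemma theta_perm_conjX a m : theta_perm a 1 ^+ m = theta_perm (a ^+ m) 1.
Proof.
elim: m => [|m IHm]; first by rewrite theta_perm1.
by rewrite expgSr IHm theta_permM lam1g circ1g -expgSr.
Qed.

Definition lam_closed S := forall a x, a \in S -> x \in S -> lam a x \in S.

Lemma lam_closedT : lam_closed [set: gT].
Proof. by move=> a x _ _; apply: in_setT. Qed.

Lemma theta_permX S a b n : lam_closed S -> a \in S -> b \in S ->
  exists2 a', a' \in S & theta_perm a b ^+ n = theta_perm a' (circ_pow b n).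
Proof.
move=> lamS Sa Sb; elim: n => [|n [a' Sa' IHn]]; first by exists 1; rewrite ?theta_perm1.
exists (lam b a' * a); first by rewrite groupM ?lamS.
by rewrite expgSr IHn theta_permM.
Qed.

Lemma theta_perm_group_set S : circ_closed S -> lam_closed S ->
  group_set [set theta_perm a b | a in S, b in S].
Proof.
move=> circS lamS; apply/group_setP; split; first by rewrite -theta_perm1 imset2_f.
move=> _ _ /imset2P[a b Sa Sb ->] /imset2P[a' b' Sa' Sb' ->].
by rewrite theta_permM imset2_f ?circS // groupM // lamS.
Qed.

Definition theta_group S (circS : circ_closed S) (lamS : lam_closed S) :=
  Group (theta_perm_group_set circS lamS).

Lemma orbit_theta_group S (circS : circ_closed S) (lamS : lam_closed S) y :
  orbit 'P (theta_group circS lamS) y = [set lam b y ^ a | a in S, b in S].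
Proof.
apply/setP => w; apply/imsetP/imset2P => [[_ /imset2P[a b Sa Sb ->] ->] | [a b Sa Sb ->]].
  by exists a b; rewrite //= apermE theta_permE.
by exists (theta_perm a b); rewrite ?imset2_f //= apermE theta_permE.
Qed.

(* theta_(a,b)(y) = a + lambda_b(y) - a is the conjugate of lambda_b(y) by -a. *)
Lemma theta_orbitE y :
  theta_orbit circ y = [set lam b y ^ a | a in [set: gT], b in [set: gT]].
Proof.
apply/setP => w; apply/imset2P/imset2P => [] [a b _ _ ->].
  by exists a^-1 b; rewrite ?in_setT // conjgE invgK -mulgA.
by exists a^-1 b; rewrite ?in_setT // conjgE invgK mulgA.
Qed.

Section NilpotentType.
Hypothesis nilG : nilpotent [set: gT].

(* In a skew brace of nilpotent type, each Hall subgroup O_pi(A,+) is also a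
   subgroup of (A,o), since lambda preserves element orders. *)
Lemma circ_closed_pcore pi : circ_closed 'O_pi([set: gT]).
Proof.
move=> x y Ox Oy; rewrite circE groupM // (mem_pcoreT nilG) lam_p_elt //.
by rewrite -(mem_pcoreT nilG).
Qed.

Lemma circ_pow_pcore pi a : pi.-elt a -> circ_pow a #|'O_pi([set: gT])| = 1.
Proof.
move=> pi_a; apply: (circ_pow_card (@circ_closed_pcore pi)).
by rewrite mem_pcoreT.
Qed.

Lemma lam_pcore_period pi a x : pi.-elt a -> iter #|'O_pi([set: gT])| (lam a) x = x.
Proof. by move=> pi_a; rewrite -lam_circ_pow circ_pow_pcore // lam1g. Qed.

Hypothesis lnil : left_nilpotent circ.

(* By downward induction on k (A^n = 0), lambda_c fixes pi-elements of A^k: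
   for x in A^k, lambda_c translates x by d = c * x = lambda_c(x) - x, a
   pi-element of A^(k+1), hence fixed; as lambda_c has pi'-period, d = 0. *)
Lemma lam_coprime_fix pi c y : pi^'.-elt c -> pi.-elt y -> lam c y = y.
Proof.
move=> pi'c; have [n An1] := lnil.
suff fix_depth m k : k + m = n ->
    forall x, x \in bpow circ k -> pi.-elt x -> lam c x = x.
  by apply: (fix_depth n 0) => //; rewrite in_setT.
elim: m k => [|m IHm] k.
  by rewrite addn0 => -> x; rewrite An1 => /set1P -> _; rewrite (morph1_mul (lamM c)).
move=> km x Akx pi_x; set d := bstar circ c x.
have Ad : d \in bpow circ k.+1 by apply: mem_gen; apply: imset2_f; rewrite ?in_setT.
have pi_d : pi.-elt d.
  by rewrite -(mem_pcoreT nilG) groupM ?groupV // (mem_pcoreT nilG) // lam_p_elt.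
have lam_d : lam c d = d by apply: (IHm k.+1); rewrite ?addSnnS.
have lam_x : lam c x = d * x by rewrite mulgKV.
have period := lam_pcore_period x pi'c.
have d1 := fixed_translation_trivial (lamM c) (pcore_pgroup _ _) period
  lam_d lam_x pi_d.
by rewrite lam_x d1 mul1g.
Qed.

Lemma lam_constt pi b y : pi.-elt y -> lam b y = lam b.`_pi y.
Proof.
move=> pi_y; have [d [bd1 _]] := circ_inverse b.`_pi.
set c := lam d b.`_pi^'.
have bc : circ b.`_pi c = b by rewrite circE /c -lam_circ bd1 lam1g consttC.
rewrite -{1}bc lam_circ (lam_coprime_fix _ pi_y) //.
exact/lam_p_elt/p_elt_constt.
Qed.

Lemma lam_orbit_pcore pi y :
  pi.-elt y -> lam_orbit circ y = orbit 'P (lam_group (@circ_closed_pcore pi)) y.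
Proof.
move=> pi_y; rewrite orbit_lam_group; apply/setP => w.
apply/imsetP/imsetP => [[a _ ->] | [a _ ->]]; last by exists a; rewrite ?in_setT.
by exists a.`_pi; rewrite ?(mem_pcoreT nilG) ?p_elt_constt // -lam_constt.
Qed.

Lemma pgroup_lam_group_pcore pi : pi.-group (lam_group (@circ_closed_pcore pi)).
Proof.
apply: pgroup_of_p_elts => _ /imsetP[a Oa ->].
apply: (p_elt_of_expg (pcore_pgroup pi [set: gT])).
by rewrite lam_permX circ_pow_pcore ?lam_perm1 // -(mem_pcoreT nilG).
Qed.

Lemma lambda_graph : connected_diam_le2 (Lambda_graph_vertices circ).
Proof.
have lamT : lam_orbit circ =1 orbit 'P (lam_group circ_closedT).
  by move=> y; rewrite orbit_lam_group.
rewrite /Lambda_graph_vertices (orbit_vertices_eq lamT).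
apply: orbit_graph_diam2 nilG.
  by move=> _ /imsetP[a _ ->] x y; rewrite !permE lamM.
move=> pi y pi_y; rewrite -lamT (lam_orbit_pcore pi_y).
exact: pnat_orbit (pgroup_lam_group_pcore pi).
Qed.

Lemma lam_closed_pcore pi : lam_closed 'O_pi([set: gT]).
Proof. by move=> a x _; rewrite !(mem_pcoreT nilG); apply: lam_p_elt. Qed.

Lemma theta_orbit_pcore pi y : pi.-elt y -> theta_orbit circ y =
  orbit 'P (theta_group (@circ_closed_pcore pi) (@lam_closed_pcore pi)) y.
Proof.
move=> pi_y; rewrite theta_orbitE orbit_theta_group; apply/setP => w.
apply/imset2P/imset2P => [[a b _ _ ->] | [a b _ _ ->]]; last first.
  by exists a b; rewrite ?in_setT.
exists a.`_pi b.`_pi; rewrite ?(mem_pcoreT nilG) ?p_elt_constt //.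
by rewrite -lam_constt // -conjg_p_elt_constt // lam_p_elt.
Qed.

Lemma pgroup_theta_group_pcore pi :
  pi.-group (theta_group (@circ_closed_pcore pi) (@lam_closed_pcore pi)).
Proof.
apply: pgroup_of_p_elts => _ /imset2P[a b Oa Ob ->].
have [a' Oa' thetaN] := theta_permX #|'O_pi([set: gT])| (@lam_closed_pcore pi) Oa Ob.
have pi_b : pi.-elt b by rewrite -(mem_pcoreT nilG).
have pi_a' : pi.-elt a' by rewrite -(mem_pcoreT nilG).
apply: (@p_elt_of_expg _ _ _ (#|'O_pi([set: gT])| * #[a'])).
  by rewrite pnatM -pgroupE pcore_pgroup.
by rewrite expgM thetaN circ_pow_pcore // theta_perm_conjX expg_order theta_perm1.
Qed.

Lemma theta_graph : connected_diam_le2 (Theta_graph_vertices circ).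
Proof.
have thetaT : theta_orbit circ =1 orbit 'P (theta_group circ_closedT lam_closedT).
  by move=> y; rewrite orbit_theta_group theta_orbitE.
rewrite /Theta_graph_vertices (orbit_vertices_eq thetaT).
apply: orbit_graph_diam2 nilG.
  by move=> _ /imset2P[a b _ _ ->] x y; rewrite !theta_permE lamM conjMg.
move=> pi y pi_y; rewrite -thetaT (theta_orbit_pcore pi_y).
exact: pnat_orbit (pgroup_theta_group_pcore pi).
Qed.

End NilpotentType.

End SkewBrace.

Theorem mainTheorem4 (gT : finGroupType) (circ : gT -> gT -> gT) :
  is_skew_brace circ ->
  left_nilpotent circ ->
  nilpotent [set: gT] ->
  connected_diam_le2 (Lambda_graph_vertices circ) /\
  connected_diam_le2 (Theta_graph_vertices circ).
Proof.
move=> sb lnil nilG.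
by split; [exact: lambda_graph sb nilG lnil | exact: theta_graph sb nilG lnil].
Qed.
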